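(* Let $G$ be a concurrent game structure, $T\subseteq S$, with all states of $T\cup W_2$ absorbing. Let $\xi_1^{\mathrm{unif}}$ be the player-1 selector that at every state $s\in S\setminus(T\cup W_2)$ chooses all moves in $\Gamma_1(s)$ uniformly at random. Then $\xi_1^{\mathrm{unif}}$ is proper.
   Context: Concurrent game structure $G=(S,M,\Gamma_1,\Gamma_2,\delta)$: finite states $S$, finite moves $M$, nonempty move sets $\Gamma_i(s)\subseteq M$, transition probabilities $\delta(s,a_1,a_2)\in\mathrm{Distr}(S)$ (moves chosen simultaneously and independently). A state is absorbing if every move pair leads back to it with probability 1. A selector for player $i$ assigns to each state $s$ a distribution on $\Gamma_i(s)$; $\overline{\xi}$ is the memoryless strategy playing $\xi$ at every step. $\Pr_s^{\pi_1,\pi_2}$ is the measure on plays from $s$ induced by strategies $\pi_1,\pi_2$. $\mathrm{Reach}(X)$: plays visiting $X$. $\mathrm{val}_1(\mathrm{Reach}(T))(s)=\sup_{\pi_1}\inf_{\pi_2}\Pr_s^{\pi_1,\pi_2}(\mathrm{Reach}(T))$, $W_2=\{s:\mathrm{val}_1(\mathrm{Reach}(T))(s)=0\}$. A player-1 strategy $\pi_1$ is proper if for every player-2 strategy $\pi_2$ and all $s\in S\setminus(T\cup W_2)$, $\Pr_s^{\pi_1,\pi_2}(\mathrm{Reach}(T\cup W_2))=1$; a selector $\xi_1$ is proper if $\overline{\xi}_1$ is proper. *)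

From HB Require Import structures.
From mathcomp Require Import all_boot all_order all_algebra.
From mathcomp Require Import boolp classical_sets reals.
Set Implicit Arguments. Unset Strict Implicit. Unset Printing Implicit Defensive.
Import Order.TTheory GRing.Theory Num.Theory.
Local Open Scope ring_scope.
Local Open Scope classical_set_scope.

Section Games.
Variables (R : realType) (S M : finType).

Record cgs := CGS {
  Gamma1 : S -> {set M};
  Gamma2 : S -> {set M};
  delta : S -> M -> M -> S -> R }.

Definition cgs_valid (G : cgs) : Prop :=
  (forall s, Gamma1 G s != finset.set0) /\ (forall s, Gamma2 G s != finset.set0) /\
  (forall s a1 a2 s', 0 <= delta G s a1 a2 s') /\
  (forall s a1 a2, \sum_(s' : S) delta G s a1 a2 s' = 1).

Definition absorbing (G : cgs) (s : S) : Prop :=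
  forall a1 a2, a1 \in Gamma1 G s -> a2 \in Gamma2 G s -> delta G s a1 a2 s = 1.

Definition move_distr (A : {set M}) (d : M -> R) : Prop :=
  (forall a, 0 <= d a) /\ (forall a, a \notin A -> d a = 0) /\
  \sum_(a : M) d a = 1.

(* A (general, randomized, history-dependent) strategy: the history is the
   nonempty sequence of states s0 :: r; its current state is last s0 r. *)
Definition strategy := S -> seq S -> M -> R.

Definition strategy_valid (Gam : S -> {set M}) (pi : strategy) : Prop :=
  forall s0 r, move_distr (Gam (last s0 r)) (pi s0 r).

Definition selector := S -> M -> R.

Definition selector_valid (Gam : S -> {set M}) (xi : selector) : Prop :=
  forall s, move_distr (Gam s) (xi s).

Definition memoryless (xi : selector) : strategy := fun s0 r => xi (last s0 r).

Section Measure.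
Variables (G : cgs) (pi1 pi2 : strategy).

Definition step_prob (s0 : S) (r : seq S) (x : S) : R :=
  \sum_(a1 : M) \sum_(a2 : M)
     pi1 s0 r a1 * pi2 s0 r a2 * delta G (last s0 r) a1 a2 x.

Fixpoint path_prob (s0 : S) (r : seq S) (t : seq S) : R :=
  match t with
  | [::] => 1
  | x :: t' => step_prob s0 r x * path_prob s0 (rcons r x) t'
  end.

Definition reach_within (X : {set S}) (s : S) (n : nat) : R :=
  \sum_(t : n.-tuple S)
     (if has (fun x => x \in X) (s :: val t) then path_prob s [::] t else 0).

(* Pr_s^{pi1,pi2}(Reach X): Reach X is the increasing union of the events
   "visit X within n steps", so its measure is the supremum of these. *)
Definition Pr_reach (X : {set S}) (s : S) : R :=
  sup (range (reach_within X s)).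
End Measure.

Definition val1_reach (G : cgs) (T : {set S}) (s : S) : R :=
  sup [set inf [set Pr_reach G pi1 pi2 T s | pi2 in strategy_valid (Gamma2 G)]
       | pi1 in strategy_valid (Gamma1 G)].

Definition W2 (G : cgs) (T : {set S}) : {set S} :=
  [set s | val1_reach G T s == 0].

Definition proper (G : cgs) (T : {set S}) (pi1 : strategy) : Prop :=
  forall pi2, strategy_valid (Gamma2 G) pi2 ->
  forall s, s \notin T :|: W2 G T ->
    Pr_reach G pi1 pi2 (T :|: W2 G T) s = 1.

Definition proper_selector (G : cgs) (T : {set S}) (xi : selector) : Prop :=
  proper G T (memoryless xi).

End Games.

From Pilot Require Import Defs.
From HB Require Import structures.
(* classical_sets first, so that the finset lemmas shadow their namesakes. *)
From mathcomp Require Import boolp classical_sets reals.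
From mathcomp Require Import all_boot all_order all_algebra.
From mathcomp Require Import ring lra.
Import Order.TTheory GRing.Theory Num.Theory.
Local Open Scope ring_scope.
Set Implicit Arguments. Unset Strict Implicit. Unset Printing Implicit Defensive.

(* Let X = T :|: W2 and let A be the least set containing X and closed under
   the positive predecessor operator: a state is a positive predecessor of Y if
   every move of player 2 there can be answered by a move of player 1 that enters
   Y with positive probability.  Outside A, player 2 has at each state a move
   keeping the play outside A against every move of player 1; playing it forever
   makes T unreachable, so such a state lies in W2, hence in A: thus A = S.
   Against the uniform selector, from the k-th approximant of A the play enters X
   within k steps with probability at least p^k, p being the least positive
   transition probability divided by |M| + 1.  So, whatever player 2 does, the
   probability of avoiding X during |S| steps is at most 1 - p^|S| from every
   history, during k|S| steps at most (1 - p^|S|)^k, and X is reached almost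
   surely. *)

Lemma big_tuple0 (V : nmodType) (S : finType) (F : 0.-tuple S -> V) :
  \sum_t F t = F [tuple].
Proof. by rewrite (big_pred1 [tuple]) // => t /=; apply/esym/eqP; rewrite [t]tuple0. Qed.

Lemma big_tupleS (V : nmodType) (S : finType) n (F : n.+1.-tuple S -> V) :
  \sum_t F t = \sum_(x : S) \sum_(t : n.-tuple S) F [tuple of x :: t].
Proof.
rewrite pair_big (reindex (fun p : S * n.-tuple S => [tuple of p.1 :: p.2])) //=.
exists (fun t : n.+1.-tuple S => (thead t, [tuple of behead t])).
  by move=> [x t] _; congr pair; apply: val_inj.
by move=> t _; apply: val_inj; case: t => -[|x s].
Qed.

Lemma ler_sum_term (R : numDomainType) (I : finType) (F : I -> R) i :
  (forall j, 0 <= F j) -> F i <= \sum_j F j.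
Proof. by move=> F_ge0; rewrite (bigD1 i) //= lerDl sumr_ge0. Qed.

Lemma bernoulli_subr (R : realFieldType) (q : R) k : 0 <= q <= 1 ->
  (1 + k%:R * q) * (1 - q) ^+ k <= 1.
Proof.
case/andP=> q0 q1; elim: k => [|k IH]; first by rewrite mul0r addr0 expr0 mulr1.
have y0 : 0 <= (1 - q) ^+ k by rewrite exprn_ge0 // subr_ge0.
have k0 : 0 <= k%:R :> R by [].
move: IH y0 k0; rewrite exprS -natr1.
move: ((1 - q) ^+ k) (k%:R : R) => y kk IH y0 k0.
have h1 : 0 <= kk * q * q * y by rewrite !mulr_ge0.
have h2 : 0 <= q * q * y by rewrite !mulr_ge0.
have -> : (1 + (kk + 1) * q) * ((1 - q) * y)
        = (1 + kk * q) * y - (kk * q * q * y + q * q * y) by ring.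
lra.
Qed.

Lemma geometric_lt (R : archiRealFieldType) (q e : R) : 0 < q <= 1 -> 0 < e ->
  exists k, (1 - q) ^+ k < e.
Proof.
case/andP=> q0 q1 e0; set k := Num.Def.archi_bound (e * q)^-1; exists k.
have eq0 : 0 < e * q by rewrite mulr_gt0.
have : (e * q)^-1 < k%:R by rewrite archi_boundP // invr_ge0 ltW.
rewrite -(ltr_pM2l eq0) mulfV ?gt_eqF // mulrAC -mulrA => ekq.
have q01 : 0 <= q <= 1 by rewrite ltW.
have := bernoulli_subr k q01.
have y0 : 0 <= (1 - q) ^+ k by rewrite exprn_ge0 // subr_ge0.
have z0 : 0 <= k%:R * q by rewrite mulr_ge0 // ltW.
move: ekq y0 z0; move: ((1 - q) ^+ k) (k%:R * q) => y z; nra.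
Qed.

Lemma memoryless_valid (R : realType) (S M : finType) (Gam : S -> {set M})
    (xi : selector R S M) :
  selector_valid Gam xi -> strategy_valid Gam (memoryless xi).
Proof. by move=> xi_valid s0 r; apply: xi_valid. Qed.

Section Play.
Variables (R : realType) (S M : finType) (G : cgs R S M) (pi1 pi2 : strategy R S M).
Hypotheses (HG : cgs_valid G) (H1 : strategy_valid (Gamma1 G) pi1)
  (H2 : strategy_valid (Gamma2 G) pi2).

Local Notation step_prob := (step_prob G pi1 pi2).
Local Notation path_prob := (path_prob G pi1 pi2).

Lemma step_prob_ge0 s0 r x : 0 <= step_prob s0 r x.
Proof.
have [_ [_ [delta_ge0 _]]] := HG; have [pi1_ge0 _] := H1 s0 r.
have [pi2_ge0 _] := H2 s0 r.
by apply: sumr_ge0 => a1 _; apply: sumr_ge0 => a2 _; rewrite !mulr_ge0.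
Qed.

Lemma sum_step_prob s0 r : \sum_x step_prob s0 r x = 1.
Proof.
have [_ [_ [_ sum_delta]]] := HG.
have [_ [_ sum_pi1]] := H1 s0 r; have [_ [_ sum_pi2]] := H2 s0 r.
rewrite /Defs.step_prob exchange_big /= -sum_pi1; apply: eq_bigr => a1 _.
rewrite exchange_big /= -[RHS]mulr1 -sum_pi2 mulr_sumr; apply: eq_bigr => a2 _.
by rewrite -mulr_sumr sum_delta mulr1.
Qed.

Lemma sum_step_prob_in (Y : {set S}) s0 r :
  \sum_(x in Y) step_prob s0 r x =
  \sum_a2 pi2 s0 r a2 * \sum_a1 pi1 s0 r a1 * \sum_(x in Y) delta G (last s0 r) a1 a2 x.
Proof.
rewrite /Defs.step_prob exchange_big /=.
under eq_bigr do rewrite exchange_big /=.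
rewrite exchange_big /=; apply: eq_bigr => a2 _; rewrite mulr_sumr.
apply: eq_bigr => a1 _; rewrite !mulr_sumr.
by apply: eq_bigr => x _; rewrite mulrCA mulrA.
Qed.

Lemma path_prob_ge0 s0 r t : 0 <= path_prob s0 r t.
Proof. by elim: t r => [|x t IH] r //=; rewrite mulr_ge0 ?step_prob_ge0. Qed.

Lemma sum_path_prob s0 r n : \sum_(t : n.-tuple S) path_prob s0 r t = 1.
Proof.
elim: n r => [|n IH] r; first by rewrite big_tuple0.
rewrite big_tupleS -(sum_step_prob s0 r); apply: eq_bigr => x _.
by rewrite -mulr_sumr IH mulr1.
Qed.

Definition avoid_within (X : {set S}) s0 r n :=
  \sum_(t : n.-tuple S)
     (if ~~ has (fun x => x \in X) (last s0 r :: t) then path_prob s0 r t else 0).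

Lemma avoid_within0 X s0 r : avoid_within X s0 r 0 = (last s0 r \notin X)%:R.
Proof. by rewrite /avoid_within big_tuple0 /= orbF; case: (_ \in X). Qed.

Lemma avoid_withinS X s0 r n : avoid_within X s0 r n.+1 =
  if last s0 r \in X then 0
  else \sum_x step_prob s0 r x * avoid_within X s0 (rcons r x) n.
Proof.
rewrite /avoid_within big_tupleS /=; case: (last s0 r \in X) => /=.
  by apply: big1 => x _; apply: big1.
apply: eq_bigr => x _; rewrite mulr_sumr; apply: eq_bigr => t _.
by rewrite last_rcons /=; case: ifP; rewrite ?mulr0.
Qed.

Lemma avoid_within_ge0 X s0 r n : 0 <= avoid_within X s0 r n.
Proof. by apply: sumr_ge0 => t _; case: ifP => _ //; apply: path_prob_ge0. Qed.

Lemma avoid_within_le1 X s0 r n : avoid_within X s0 r n <= 1.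
Proof.
rewrite -(sum_path_prob s0 r n); apply: ler_sum => t _.
by case: ifP => _ //; apply: path_prob_ge0.
Qed.

Lemma avoid_withinS_le X s0 r n : avoid_within X s0 r n.+1 <= avoid_within X s0 r n.
Proof.
elim: n r => [|n IH] r; rewrite avoid_withinS.
  rewrite avoid_within0; case: ifP => // _; rewrite -(sum_step_prob s0 r).
  by apply: ler_sum => x _; rewrite ler_piMr ?step_prob_ge0 ?avoid_within_le1.
rewrite [leRHS]avoid_withinS; case: ifP => // _; apply: ler_sum => x _.
by rewrite ler_wpM2l ?step_prob_ge0.
Qed.

Lemma avoid_within_addn X s0 n c : 0 <= c -> (forall r, avoid_within X s0 r n <= c) ->
  forall m r, avoid_within X s0 r (m + n) <= c * avoid_within X s0 r m.
Proof.
move=> c0 le_c; elim=> [|m IH] r.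
  rewrite add0n avoid_within0; case: (boolP (_ \in X)) => Xr; last by rewrite mulr1.
  by case: n {le_c} => [|n]; rewrite ?avoid_within0 ?avoid_withinS Xr mulr0.
rewrite addSn !avoid_withinS; case: ifP => _; first by rewrite mulr0.
rewrite mulr_sumr; apply: ler_sum => x _.
by rewrite mulrCA ler_wpM2l ?step_prob_ge0.
Qed.

Lemma reach_withinE X s n :
  reach_within G pi1 pi2 X s n = 1 - avoid_within X s [::] n.
Proof.
rewrite -(sum_path_prob s [::] n) /avoid_within -sumrB; apply: eq_bigr => t _ /=.
by case: ifP => _; rewrite ?subr0 ?subrr.
Qed.

Lemma has_ubound_reach_within X s : has_ubound (range (reach_within G pi1 pi2 X s)).
Proof. by exists 1 => _ [n _ <-]; rewrite reach_withinE gerBl avoid_within_ge0. Qed.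

Lemma Pr_reach_ge0 X s : 0 <= Pr_reach G pi1 pi2 X s.
Proof.
have zero_in : range (reach_within G pi1 pi2 X s) (reach_within G pi1 pi2 X s 0).
  by exists 0%N.
apply: le_trans (ub_le_sup (has_ubound_reach_within X s) zero_in).
by rewrite reach_withinE subr_ge0 avoid_within_le1.
Qed.

Lemma Pr_reach_eq1 X s :
  (forall e, 0 < e -> exists n, avoid_within X s [::] n < e) ->
  Pr_reach G pi1 pi2 X s = 1.
Proof.
move=> avoid_small; apply/eqP; rewrite eq_le; apply/andP; split.
  apply: ge_sup; first by exists (reach_within G pi1 pi2 X s 0); exists 0%N.
  by move=> _ [n _ <-]; rewrite reach_withinE gerBl avoid_within_ge0.
apply/ler_addgt0Pr => e /avoid_small [n avoid_lt].
have n_in : range (reach_within G pi1 pi2 X s) (reach_within G pi1 pi2 X s n).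
  by exists n.
apply: le_trans (lerD (ub_le_sup (has_ubound_reach_within X s) n_in) (lexx e)).
rewrite reach_withinE; lra.
Qed.

End Play.

Lemma Pr_reach_eq0 (R : realType) (S M : finType) (G : cgs R S M) pi1 pi2 X s :
  (forall n, reach_within G pi1 pi2 X s n = 0) -> Pr_reach G pi1 pi2 X s = 0.
Proof.
move=> reach0; rewrite /Pr_reach (_ : range _ = [set 0]%classic) ?sup1 //.
by apply/seteqP; split=> y /=; [case=> n _ <- | move=> ->; exists 0%N].
Qed.

Lemma val1_reach_eq0 (R : realType) (S M : finType) (G : cgs R S M) T s pi2 :
  cgs_valid G -> strategy_valid (Gamma2 G) pi2 ->
  (exists pi1 : strategy R S M, strategy_valid (Gamma1 G) pi1) ->
  (forall pi1, strategy_valid (Gamma1 G) pi1 -> Pr_reach G pi1 pi2 T s = 0) ->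
  val1_reach G T s = 0.
Proof.
move=> HG H2 [pi0 H0] Pr0.
have inf0 pi1 : strategy_valid (Gamma1 G) pi1 ->
    inf [set Pr_reach G pi1 pi2' T s | pi2' in strategy_valid (Gamma2 G)]%classic = 0.
  move=> H1; set E := [set _ | _ in _]%classic.
  have E0 : E 0 by exists pi2; rewrite ?Pr0.
  have lb0 : lbound E 0 by move=> _ [pi2' H2' <-]; apply: Pr_reach_ge0.
  apply/eqP; rewrite eq_le lb_le_inf ?andbT //; last by exists 0.
  by apply: ge_inf E0; exists 0.
rewrite /val1_reach (_ : [set _ | _ in _]%classic = [set 0]%classic) ?sup1 //.
apply/seteqP; split=> y /=; first by case=> pi1 H1 <-; apply: inf0.
by move=> ->; exists pi0; rewrite ?inf0.
Qed.

Section PositiveAttractor.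
Variables (R : realType) (S M : finType) (G : cgs R S M).
Hypothesis HG : cgs_valid G.

Definition ppre (Y : {set S}) : {set S} :=
  [set s | [forall a2 in Gamma2 G s, exists a1 in Gamma1 G s,
              exists x in Y, delta G s a1 a2 x != 0]].

Variable X : {set S}.

Definition pos_attr_step (Y : {set S}) := X :|: Y :|: ppre Y.

Lemma pos_attr_step_mono : {homo pos_attr_step : Y Z / Y \subset Z}.
Proof.
move=> Y Z YZ; apply: setUSS (setUS X YZ) _.
apply/subsetP => s; rewrite !inE => /forall_inP ppreY; apply/forall_inP => a2 /ppreY.
case/exists_inP=> a1 a1_in /exists_inP [x x_in delta_x]; apply/exists_inP; exists a1 => //.
by apply/exists_inP; exists x => //; apply: (subsetP YZ).
Qed.

Definition pos_attr := fixset pos_attr_step.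

Lemma pos_attrK : pos_attr_step pos_attr = pos_attr.
Proof. exact: fixsetK pos_attr_step_mono. Qed.

Lemma sub_pos_attr : X \subset pos_attr.
Proof. by rewrite -pos_attrK /pos_attr_step -setUA subsetUl. Qed.

Definition safe_move s a2 :=
  [forall a1 in Gamma1 G s, forall x in pos_attr, delta G s a1 a2 x == 0].

(* Outside [pos_attr] a safe move exists by [pos_attrK]; inside, any move will do. *)
Definition trap_move s := [pick a2 in Gamma2 G s | (s \in pos_attr) || safe_move s a2].

Definition trap_selector : selector R S M := fun s a => (trap_move s == Some a)%:R.

Lemma trap_moveP s :
  exists2 b, trap_move s = Some b &
    (b \in Gamma2 G s) && ((s \in pos_attr) || safe_move s b).
Proof.
rewrite /trap_move; case: pickP => [b|no_move]; first by exists b.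
exfalso; have [_ [Gamma2_neq0 _]] := HG.
case: (boolP (s \in pos_attr)) => [attr_s|s_out].
  have /set0Pn [a a_in] := Gamma2_neq0 s; by move: (no_move a); rewrite a_in attr_s.
move: (s_out); rewrite -{1}pos_attrK /pos_attr_step !in_setU in_set negb_or.
case/andP=> _ /forall_inPn [a2 a2_in /negP]; apply.
move: (no_move a2); rewrite a2_in (negbTE s_out) /= /safe_move.
move=> /negbT /forall_inPn [a1 a1_in /forall_inPn [x x_in delta_x]].
by apply/exists_inP; exists a1 => //; apply/exists_inP; exists x.
Qed.

Lemma trap_selector_valid : selector_valid (Gamma2 G) trap_selector.
Proof.
move=> s; have [b move_b /andP [b_in _]] := trap_moveP s; rewrite /trap_selector move_b.
split=> [a|]; first exact: ler0n.
split=> [a|]; first by apply: contraNeq; rewrite pnatr_eq0 eqb0 negbK => /eqP [<-].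
rewrite (bigD1 b) //= eqxx big1 ?addr0 // => a a_neq_b.
by case: eqP => // -[b_a]; rewrite b_a eqxx in a_neq_b.
Qed.

Section Trap.
Variable pi1 : strategy R S M.
Hypothesis H1 : strategy_valid (Gamma1 G) pi1.

Lemma step_prob_trap s0 r x : last s0 r \notin pos_attr -> x \in pos_attr ->
  step_prob G pi1 (memoryless trap_selector) s0 r x = 0.
Proof.
move=> last_out x_in; have [b move_b /andP [_]] := trap_moveP (last s0 r).
rewrite (negbTE last_out) /= => safe_b; have [_ [pi1_out _]] := H1 s0 r.
apply: big1 => a1 _; apply: big1 => a2 _.
rewrite /memoryless /trap_selector move_b (inj_eq Some_inj).
have [<-|_] := eqVneq b a2; last by rewrite mulr0 mul0r.
case: (boolP (a1 \in Gamma1 G (last s0 r))) => [a1_in|a1_out].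
  2: by rewrite pi1_out // !mul0r.
by move/forall_inP: safe_b => /(_ a1 a1_in) /forall_inP /(_ x x_in) /eqP ->; rewrite mulr0.
Qed.

Lemma path_prob_trap s0 r t : last s0 r \notin pos_attr ->
  has (fun x => x \in pos_attr) t ->
  path_prob G pi1 (memoryless trap_selector) s0 r t = 0.
Proof.
elim: t r => [|x t IH] r //= last_out /orP [x_in|t_in].
  by rewrite step_prob_trap // mul0r.
case: (boolP (x \in pos_attr)) => [x_in|x_out]; first by rewrite step_prob_trap // mul0r.
by rewrite IH ?mulr0 // last_rcons.
Qed.

Lemma Pr_reach_trap (Z : {set S}) s : Z \subset pos_attr -> s \notin pos_attr ->
  Pr_reach G pi1 (memoryless trap_selector) Z s = 0.
Proof.
move=> /subsetP Z_attr s_out; apply: Pr_reach_eq0 => n.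
apply: big1 => t _; case: ifP => //= /orP [s_in|t_in].
  by rewrite Z_attr in s_out.
by apply: path_prob_trap => //; apply: sub_has t_in.
Qed.

End Trap.
End PositiveAttractor.

Lemma pos_attr_winning (R : realType) (S M : finType) (G : cgs R S M) T :
  cgs_valid G -> (exists pi1 : strategy R S M, strategy_valid (Gamma1 G) pi1) ->
  pos_attr G (T :|: W2 G T) = setT.
Proof.
move=> HG ex_pi1; apply/setP => s; rewrite in_setT; apply/negbNE/negP => s_out.
have s_W2 : s \in W2 G T.
  have trap_valid := memoryless_valid (trap_selector_valid HG (T :|: W2 G T)).
  rewrite in_set; apply/eqP; apply: (val1_reach_eq0 HG trap_valid) => // pi1 H1.
  apply: (Pr_reach_trap HG H1 _ s_out).
  by apply: subset_trans (subsetUl _ _) _; apply: sub_pos_attr.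
by move: s_out; rewrite (subsetP (sub_pos_attr _ _)) // in_setU s_W2 orbT.
Qed.

Section MinPositiveTransition.
Variables (R : realType) (S M : finType) (G : cgs R S M).

Definition min_pos_delta : R :=
  \big[Num.min/1]_(i : S * M * M * S | delta G i.1.1.1 i.1.1.2 i.1.2 i.2 != 0)
     delta G i.1.1.1 i.1.1.2 i.1.2 i.2.

Lemma min_pos_delta_le s a1 a2 x :
  delta G s a1 a2 x != 0 -> min_pos_delta <= delta G s a1 a2 x.
Proof.
by move=> delta_neq0; rewrite /min_pos_delta (bigD1 (s, a1, a2, x)) //= ge_min lexx.
Qed.

Hypothesis HG : cgs_valid G.

Lemma min_pos_delta_gt0 : 0 < min_pos_delta.
Proof.
have [_ [_ [delta_ge0 _]]] := HG.
apply: (big_ind (fun y => 0 < y)) => // [y z y0 z0|i delta_neq0].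
  by rewrite lt_min y0 z0.
by rewrite lt_def delta_neq0 delta_ge0.
Qed.

Lemma min_pos_delta_le1 : min_pos_delta <= 1.
Proof.
have [_ [_ [delta_ge0 sum_delta]]] := HG.
apply: (big_ind (fun y => y <= 1)) => // [y z y1 _|[[[s a1] a2] x] _ /=].
  by rewrite ge_min y1.
by rewrite -(sum_delta s a1 a2) ler_sum_term.
Qed.

End MinPositiveTransition.

Section Uniform.
Variables (R : realType) (S M : finType) (G : cgs R S M) (T : {set S})
  (xi1 : selector R S M) (pi2 : strategy R S M).
Hypotheses (HG : cgs_valid G) (Hxi1 : selector_valid (Gamma1 G) xi1)
  (H2 : strategy_valid (Gamma2 G) pi2)
  (xi1_uniform : forall s, s \notin T :|: W2 G T ->
     forall a, xi1 s a = if a \in Gamma1 G s then (#|Gamma1 G s|%:R)^-1 else 0).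

Local Notation X := (T :|: W2 G T).
Local Notation pi1 := (memoryless xi1).
Let H1 : strategy_valid (Gamma1 G) pi1 := memoryless_valid Hxi1.

(* Dividing by [#|M|.+1] rather than [#|M|] keeps [p] positive even if [M] is empty. *)
Let p := min_pos_delta G / #|M|.+1%:R.

Let p_gt0 : 0 < p.
Proof. by rewrite divr_gt0 ?min_pos_delta_gt0. Qed.

Let p_le1 : p <= 1.
Proof.
rewrite ler_pdivrMr // mul1r; apply: le_trans (min_pos_delta_le1 HG) _.
by rewrite ler1n.
Qed.

Lemma uniform_hit_ge (Y : {set S}) s a2 : s \notin X -> s \in ppre G Y ->
  a2 \in Gamma2 G s -> p <= \sum_a1 xi1 s a1 * \sum_(x in Y) delta G s a1 a2 x.
Proof.
move=> s_out; rewrite in_set => /forall_inP ppre_s /ppre_s.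
case/exists_inP=> a1 a1_in /exists_inP [x x_in delta_x].
have [_ [_ [delta_ge0 _]]] := HG; have [xi1_ge0 _] := Hxi1 s.
have hit_ge0 b : 0 <= xi1 s b * \sum_(y in Y) delta G s b a2 y.
  by rewrite mulr_ge0 ?sumr_ge0.
have hit_le :
    xi1 s a1 * delta G s a1 a2 x <= \sum_b xi1 s b * \sum_(y in Y) delta G s b a2 y.
  apply: le_trans (ler_sum_term a1 hit_ge0); rewrite ler_wpM2l //.
  by rewrite (bigD1 x) //= lerDl sumr_ge0.
apply: le_trans hit_le; rewrite (xi1_uniform s_out) a1_in /p mulrC.
have Gamma1_gt0 : (0 < #|Gamma1 G s|)%N by apply/card_gt0P; exists a1.
have d_ge0 : 0 <= min_pos_delta G by apply/ltW/min_pos_delta_gt0.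
rewrite ler_pM ?invr_ge0 ?min_pos_delta_le //.
by rewrite lef_pV2 ?posrE ?ltr0n // ler_nat ltnW // ltnS max_card.
Qed.

Lemma step_into_ge (Y : {set S}) s0 r :
  last s0 r \notin X -> last s0 r \in ppre G Y ->
  p <= \sum_(x in Y) step_prob G pi1 pi2 s0 r x.
Proof.
move=> last_out last_ppre; have [pi2_ge0 [pi2_out sum_pi2]] := H2 s0 r.
rewrite sum_step_prob_in -[p]mul1r -sum_pi2 mulr_suml; apply: ler_sum => a2 _.
case: (boolP (a2 \in Gamma2 G (last s0 r))) => [a2_in|a2_out].
  by rewrite ler_wpM2l // uniform_hit_ge.
by rewrite pi2_out // !mul0r.
Qed.

Lemma avoid_within_pos_attr_iter k s0 r :
  last s0 r \in iter k (pos_attr_step G X) set0 ->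
  avoid_within G pi1 pi2 X s0 r k <= 1 - p ^+ k.
Proof.
have pk_ge0 j : 0 <= p ^+ j by rewrite exprn_ge0 // ltW.
elim: k r => [|k IH] r /=; first by rewrite in_set0.
case: (boolP (last s0 r \in X)) => [last_in _|last_out].
  by rewrite avoid_withinS last_in subr_ge0 exprn_ile1 // ltW.
rewrite /pos_attr_step in_setU => /orP [|last_ppre].
  rewrite in_setU (negbTE last_out) /= => last_iter.
  apply: le_trans (avoid_withinS_le HG H1 H2 _ _ _ _) _.
  apply: le_trans (IH _ last_iter) _.
  by rewrite lerD2l lerN2 exprS ler_piMl.
set Y := iter k _ set0 in IH last_ppre.
have avoid_le x :
    avoid_within G pi1 pi2 X s0 (rcons r x) k <= 1 - p ^+ k * (x \in Y)%:R.
  case: (boolP (x \in Y)) => x_in; first by rewrite mulr1 IH ?last_rcons.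
  by rewrite mulr0 subr0 avoid_within_le1.
rewrite avoid_withinS (negbTE last_out).
have step_avoid_le x : step_prob G pi1 pi2 s0 r x * avoid_within G pi1 pi2 X s0 (rcons r x) k
    <= step_prob G pi1 pi2 s0 r x * (1 - p ^+ k * (x \in Y)%:R).
  by rewrite ler_wpM2l ?step_prob_ge0.
apply: le_trans (ler_sum _ (fun x _ => step_avoid_le x)) _.
under eq_bigr do rewrite mulrBr mulr1.
rewrite sumrB sum_step_prob // lerD2l lerN2 exprSr.
have -> : \sum_x step_prob G pi1 pi2 s0 r x * (p ^+ k * (x \in Y)%:R) =
          p ^+ k * \sum_(x in Y) step_prob G pi1 pi2 s0 r x.
  rewrite [in RHS]big_mkcond mulr_sumr; apply: eq_bigr => x _.
  by case: (x \in Y); rewrite ?mulr1 ?mulr0 // mulrC.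
by rewrite ler_wpM2l // step_into_ge.
Qed.

Lemma avoid_within_card s0 r : avoid_within G pi1 pi2 X s0 r #|S| <= 1 - p ^+ #|S|.
Proof.
apply: avoid_within_pos_attr_iter.
by rewrite -[iter _ _ _]/(pos_attr G X) pos_attr_winning ?in_setT //; exists pi1.
Qed.

Lemma avoid_within_geometric s0 k r :
  avoid_within G pi1 pi2 X s0 r (k * #|S|) <= (1 - p ^+ #|S|) ^+ k.
Proof.
have c_ge0 : 0 <= 1 - p ^+ #|S| by rewrite subr_ge0 exprn_ile1 // ltW.
elim: k r => [|k IH] r; first by rewrite mul0n expr0 avoid_within_le1.
rewrite mulSnr exprS.
apply: le_trans (avoid_within_addn HG H1 H2 c_ge0 (avoid_within_card s0) _ r) _.
by rewrite ler_wpM2l.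
Qed.

Lemma Pr_reach_uniform s : Pr_reach G pi1 pi2 X s = 1.
Proof.
apply: Pr_reach_eq1 HG H1 H2 _ _ _ => e e_gt0.
have q_in : 0 < p ^+ #|S| <= 1 by rewrite exprn_gt0 // exprn_ile1 // ltW.
have [k lt_e] := geometric_lt q_in e_gt0.
by exists (k * #|S|)%N; apply: le_lt_trans (avoid_within_geometric s k [::]) lt_e.
Qed.

End Uniform.

Theorem lemma2 (R : realType) (S M : finType) (G : cgs R S M) (T : {set S})
  (xi1 : selector R S M) :
  cgs_valid G ->
  (forall s, s \in T :|: W2 G T -> absorbing G s) ->
  selector_valid (Gamma1 G) xi1 ->
  (forall s, s \notin T :|: W2 G T ->
     forall a, xi1 s a = if a \in Gamma1 G s then (#|Gamma1 G s|%:R)^-1 else 0) ->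
  proper_selector G T xi1.
Proof.
move=> HG _ Hxi1 xi1_uniform pi2 H2 s _.
exact: Pr_reach_uniform.
Qed.
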